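(* Let $N\ge 1$ and $n\ge 1$ be integers, and let $x>1$ and $1\le y<2$ be real numbers. Let $\mathcal{S}_0,\dots,\mathcal{S}_{n-1}$ be nonempty sets of QPSK sequences of length $N$ such that, for every $0\le i\le n-1$: (a) $\mathrm{PEP}(\mathbf{s})\le x\,y^{2i}N$ for every $\mathbf{s}\in\mathcal{S}_i$; and (b) if $\mathbf{s}\in\mathcal{S}_i$ then $j^m\mathbf{s}\in\mathcal{S}_i$ for every $m\in\mathbb{Z}_4$. Let $\mathcal{A}$ be the set of all $2^{2n}$-QAM sequences $\mathbf{a}$ associated with tuples $(\mathbf{s}_0,\dots,\mathbf{s}_{n-1})$ with $\mathbf{s}_i\in\mathcal{S}_i$ for all $i$. Then $$\mathrm{PMEPR}(\mathcal{A})\le \frac{3}{4}\cdot\frac{2^{2n}}{2^{2n}-1}\cdot\left(\frac{1-(\frac{y}{2})^{n}}{1-\frac{y}{2}}\right)^2\cdot x.$$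
   Context: Let $j=\sqrt{-1}$. Fix $T>0$ and reals $f_0,\Delta f$ with $T\Delta f$ a positive integer; set $f_k=f_0+k\Delta f$. For a complex sequence $\mathbf{a}=(a_0,\dots,a_{N-1})$ define $S_{\mathbf{a}}(t)=\sum_{k=0}^{N-1}a_ke^{2\pi j f_k t}$, $P_{\mathbf{a}}(t)=|S_{\mathbf{a}}(t)|^2$, and $\mathrm{PEP}(\mathbf{a})=\sup_{t\in[0,T]}P_{\mathbf{a}}(t)$. A QPSK sequence of length $N$ is a sequence $\mathbf{s}=(s_0,\dots,s_{N-1})$ with every $s_k\in\{1,j,-1,-j\}$; $j^m\mathbf{s}=(j^ms_0,\dots,j^ms_{N-1})$. The $2^{2n}$-QAM sequence associated with QPSK sequences $\mathbf{s}_0,\dots,\mathbf{s}_{n-1}$, $\mathbf{s}_i=(s_{i,0},\dots,s_{i,N-1})$, is $\mathbf{a}=(a_0,\dots,a_{N-1})$ with $a_k=\frac{\sqrt2}{2}e^{\pi j/4}\sum_{i=0}^{n-1}2^{n-1-i}s_{i,k}$. The mean envelope power of $\mathcal{A}$ is $P_{av}(\mathcal{A})=\mathbb{E}\big[\frac1T\int_0^TP_{\mathbf{a}}(t)\,dt\big]=\mathbb{E}\|\mathbf{a}\|^2$, where the expectation is over $\mathbf{a}$ associated with $(\mathbf{s}_0,\dots,\mathbf{s}_{n-1})$ chosen uniformly at random from $\mathcal{S}_0\times\cdots\times\mathcal{S}_{n-1}$ (each $\mathbf{s}_i$ uniform in $\mathcal{S}_i$, independently). The peak-to-mean envelope power ratio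 is $\mathrm{PMEPR}(\mathcal{A})=\max_{\mathbf{a}\in\mathcal{A}}\mathrm{PEP}(\mathbf{a})/P_{av}(\mathcal{A})$. *)

From HB Require Import structures.
From mathcomp Require Import all_boot all_order all_algebra.
From mathcomp Require Import all_classical all_reals all_analysis.
From mathcomp Require Import complex.
Set Implicit Arguments. Unset Strict Implicit. Unset Printing Implicit Defensive.
Import Order.TTheory GRing.Theory Num.Theory.
Local Open Scope classical_set_scope.
Local Open Scope ring_scope.
Local Open Scope complex_scope.

Section QAM.
Variable R : realType.

Definition expj (th : R) : R[i] := (cos th) +i* (sin th).

Definition sqmod (z : R[i]) : R := complex.Re z ^+ 2 + complex.Im z ^+ 2.

Definition Ssig (N : nat) (f0 df : R) (a : 'I_N -> R[i]) (t : R) : R[i] :=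
  \sum_(k < N) a k * expj (2 * pi * (f0 + k%:R * df) * t).

Definition Penv (N : nat) (f0 df : R) (a : 'I_N -> R[i]) (t : R) : R :=
  sqmod (Ssig f0 df a t).

Definition PEP (N : nat) (T f0 df : R) (a : 'I_N -> R[i]) : R :=
  sup [set Penv f0 df a t | t in `[0, T]%classic].

(* A QPSK sequence of length N: s_k = j^(e_k) with e_k in Z_4 = {0,1,2,3},
   i.e. s_k in {1, j, -1, -j}. *)
Definition qpsk (N : nat) := {ffun 'I_N -> 'I_4}.
Definition qpsk_seq (N : nat) (s : qpsk N) : 'I_N -> R[i] :=
  fun k => 'i ^+ (s k).

Definition qam_seq (n N : nat) (ss : {ffun 'I_n -> qpsk N}) : 'I_N -> R[i] :=
  fun k => ((Num.sqrt (2 : R) / 2)%:C * expj (pi / 4)) *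
           \sum_(i < n) (2 ^+ (n - 1 - i))%:R * qpsk_seq (ss i) k.

Definition sqnorm (N : nat) (a : 'I_N -> R[i]) : R := \sum_(k < N) sqmod (a k).

Definition in_prod (n N : nat) (S : 'I_n -> {set qpsk N})
  (ss : {ffun 'I_n -> qpsk N}) : bool := [forall i, ss i \in S i].

(* P_av(A) = E ||a||^2, expectation over (s_0,...,s_{n-1}) uniform on
   S_0 x ... x S_{n-1} (i.e. independent uniform components). *)
Definition Pav (n N : nat) (S : 'I_n -> {set qpsk N}) : R :=
  (\sum_(ss | in_prod S ss) sqnorm (qam_seq ss)) /
  (#|[pred ss | in_prod S ss]|)%:R.

(* PMEPR(A) = max_{a in A} PEP(a) / P_av(A), A = QAM sequences of tuples
   in S_0 x ... x S_{n-1}.  (All terms are >= 0, so max with 0 is harmless.) *)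
Definition PMEPR (n N : nat) (T f0 df : R) (S : 'I_n -> {set qpsk N}) : R :=
  \big[Num.max/0]_(ss | in_prod S ss) (PEP T f0 df (qam_seq ss) / Pav S).

End QAM.
Arguments qpsk_seq {R N} s k.

From HB Require Import structures.
From mathcomp Require Import all_boot all_order all_algebra.
From mathcomp Require Import all_classical all_reals all_analysis.
From mathcomp Require Import complex.
From mathcomp Require Import ring lra.
Set Implicit Arguments.
Unset Strict Implicit.
Unset Printing Implicit Defensive.
Import Order.TTheory GRing.Theory Num.Theory.
Local Open Scope ring_scope.
Local Open Scope complex_scope.

(* Write a = c A with |c|^2 = 1/2 and A_k = sum_i 2^(n-1-i) s_(i,k).  Since every
   S_i is closed under multiplication by j, multiplying the i-th component of a
   tuple by j permutes S_0 x ... x S_(n-1); hence the average of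
   s_(i,k) conj(s_(j,k)) vanishes for i <> j, and P_av = N/2 sum_i 4^(n-1-i)
   = N (4^n - 1) / 6.  For the peak, the triangle inequality and (a) give
   |S_a(t)| <= sqrt(x N / 2) sum_i 2^(n-1-i) y^i = sqrt(x N / 2) (2^n - y^n) / (2 - y),
   and the square of this bound divided by P_av is the claimed constant. *)

Section ComplexFacts.
Variable R : realType.
Local Notation C := R[i].
Local Notation normc := (@Normc.normc R).

Lemma expr_i4 : 'i ^+ 4 = 1 :> C.
Proof. by rewrite (exprM 'i 2 2) sqr_i sqrrN expr1n. Qed.

Lemma expr_i_mod4 (m : nat) : 'i ^+ (m %% 4) = 'i ^+ m :> C.
Proof. by rewrite {2}(divn_eq m 4) exprD mulnC exprM expr_i4 expr1n mul1r. Qed.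

Lemma expr_i_inj (a b : 'I_4) : 'i ^+ a = 'i ^+ b :> C -> a = b.
Proof.
move=> /(congr1 (fun z => complex.Re z + 2 * complex.Im z)).
apply: contra_eq => neq_ab.
have e2 : 'i ^+ 2 = -1 :> C by rewrite sqr_i.
have e3 : 'i ^+ 3 = - 'i :> C by rewrite exprS e2 mulrN1.
case: a b neq_ab => [[|[|[|[|a]]]] Ha] [[|[|[|[|b]]]] Hb] //= _;
  rewrite ?expr0 ?expr1 ?e2 ?e3 /=; apply/eqP; lra.
Qed.

Lemma i_neq0 : 'i != 0 :> C.
Proof. by apply/eqP => /(congr1 (@complex.Im R)) /= /eqP; rewrite oner_eq0. Qed.

Lemma i_neq1 : 'i != 1 :> C.
Proof. by apply/eqP => /(congr1 (@complex.Im R)) /= /eqP; rewrite oner_eq0. Qed.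

Lemma expr_i_conj (m : nat) : 'i ^+ m * ('i ^+ m)^* = 1 :> C.
Proof.
have normi : `|'i| = 1 :> C by rewrite complexiE normCi.
by rewrite -sqr_normc normrX normi !expr1n.
Qed.

Lemma sqmodE (z : C) : (sqmod z)%:C = z * z^*.
Proof. by rewrite /sqmod add_Re2_Im2 sqr_normc. Qed.

Lemma normc_sqmod (z : C) : normc z = Num.sqrt (sqmod z).
Proof. by case: z. Qed.

Lemma sqmod_normc (z : C) : sqmod z = normc z ^+ 2.
Proof. by rewrite normc_sqmod sqr_sqrtr // addr_ge0 ?sqr_ge0. Qed.

Lemma sqmodM (z w : C) : sqmod (z * w) = sqmod z * sqmod w.
Proof. by rewrite !sqmod_normc Normc.normcM exprMn. Qed.

Lemma sqmod_real (a : R) : sqmod a%:C = a ^+ 2.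
Proof. by rewrite /sqmod /= expr0n /= addr0. Qed.

Lemma sqmod_expj (th : R) : sqmod (expj th) = 1.
Proof. by rewrite /sqmod /expj /= cos2Dsin2. Qed.

Lemma normc_expr_i (m : nat) : normc ('i ^+ m) = 1.
Proof.
rewrite normc_sqmod.
suff -> : sqmod ('i ^+ m : C) = 1 by rewrite sqrtr1.
by apply: complexI; rewrite sqmodE expr_i_conj.
Qed.

Lemma normc_nat (m : nat) : normc (m%:R : C) = m%:R.
Proof.
by rewrite -(rmorph_nat (real_complex R)) /= expr0n /= addr0 sqrtr_sqr ger0_norm.
Qed.

Lemma normc_sum (I : finType) (F : I -> C) : normc (\sum_i F i) <= \sum_i normc (F i).
Proof.
elim/big_rec2: _ => [|i b a _ le_ab]; first by rewrite Normc.normc0.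
exact: le_trans (le_normcD (F i) a) (lerD (lexx _) le_ab).
Qed.

End ComplexFacts.

Definition qpsk_rot {N : nat} (s : qpsk N) : qpsk N := [ffun k => inZp (s k).+1].

Definition rot_at {n N : nat} (i : 'I_n) (ss : {ffun 'I_n -> qpsk N}) :
    {ffun 'I_n -> qpsk N} :=
  [ffun j => if j == i then qpsk_rot (ss j) else ss j].

Section QpskRotation.
Variables (R : realType) (N : nat).
Local Notation C := R[i].

Lemma qpsk_seq_rot (s : qpsk N) k : qpsk_seq (qpsk_rot s) k = 'i * qpsk_seq s k :> C.
Proof. by rewrite /qpsk_seq ffunE /= expr_i_mod4 exprS. Qed.

Lemma eq_qpsk (s s' : qpsk N) :
  (forall k, qpsk_seq s k = qpsk_seq s' k :> C) -> s = s'.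
Proof. by move=> eq_ss'; apply/ffunP => k; apply: expr_i_inj; apply: eq_ss'. Qed.

Lemma qpsk_rot_inj : injective (@qpsk_rot N).
Proof.
move=> s s' /(congr1 (fun u => qpsk_seq (R:=R) u)) eq_rot; apply: eq_qpsk => k.
have := congr1 (fun f => f k) eq_rot; rewrite /= !qpsk_seq_rot.
by move/(mulfI (@i_neq0 R)).
Qed.

End QpskRotation.

Definition qam_const {R : realType} : R[i] := (Num.sqrt (2 : R) / 2)%:C * expj (pi / 4).

Definition qam_sum {R : realType} {n N : nat} (ss : {ffun 'I_n -> qpsk N}) (k : 'I_N) : R[i] :=
  \sum_(i < n) (2 ^+ (n - 1 - i))%:R * qpsk_seq (ss i) k.

Lemma qam_seqE (R : realType) (n N : nat) (ss : {ffun 'I_n -> qpsk N}) k :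
  qam_seq R ss k = qam_const * qam_sum ss k.
Proof. by []. Qed.

Definition qam_energy {R : realType} (n : nat) : R := \sum_(i < n) ((2 ^+ (n - 1 - i))%:R) ^+ 2.

Lemma sqmod_qam_const (R : realType) : sqmod (@qam_const R) = 1 / 2.
Proof.
rewrite /qam_const sqmodM sqmod_expj mulr1 sqmod_real expr_div_n sqr_sqrtr //.
by rewrite expr2 mul1r invfM mulrA divff ?mul1r // pnatr_eq0.
Qed.

Lemma card_in_prod_gt0 (n N : nat) (S : 'I_n -> {set qpsk N}) :
  (forall i, S i != finset.set0) -> (0 < #|[pred ss | in_prod S ss]|)%N.
Proof.
move=> S_ne; apply/card_gt0P; exists [ffun i => odflt [ffun=> ord0] [pick s in S i]].
rewrite inE; apply/forallP => i; rewrite ffunE.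
by case: pickP => //= S_empty; have /set0Pn [s] := S_ne i; rewrite S_empty.
Qed.

Section RotationInvariantFamily.
Variables (R : realType) (n N : nat) (S : 'I_n -> {set qpsk N}).
Local Notation C := R[i].
Hypothesis S_rot : forall (i : 'I_n) (s : qpsk N), s \in S i -> forall m : 'I_4,
  exists2 s' : qpsk N, s' \in S i &
    forall k : 'I_N, qpsk_seq (R:=R) s' k = 'i ^+ m * qpsk_seq s k.

Lemma qpsk_rot_mem i s : (qpsk_rot s \in S i) = (s \in S i).
Proof.
apply/idP/idP => s_in.
  (* j^3 undoes the rotation by j. *)
  have [s' s'_in eq_s'] := @S_rot i _ s_in (Ordinal (isT : (3 < 4)%N)).
  suff -> : s = s' by [].
  by apply: (@eq_qpsk R) => k; rewrite eq_s' qpsk_seq_rot mulrA -exprSr expr_i4 mul1r.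
have [s' s'_in eq_s'] := @S_rot i _ s_in (Ordinal (isT : (1 < 4)%N)).
suff -> : qpsk_rot s = s' by [].
by apply: (@eq_qpsk R) => k; rewrite eq_s' qpsk_seq_rot expr1.
Qed.

Lemma rot_at_inj i : injective (@rot_at n N i).
Proof.
move=> ss ss' /ffunP eq_rot; apply/ffunP => j; have := eq_rot j.
by rewrite !ffunE; case: (j == i) => //; apply: qpsk_rot_inj.
Qed.

Lemma in_prod_rot_at i ss : in_prod S (rot_at i ss) = in_prod S ss.
Proof. by apply: eq_forallb => j; rewrite ffunE; case: (j == i); rewrite ?qpsk_rot_mem. Qed.

(* Rotating the i-th component by j permutes the tuples and multiplies the
   summand by j, so for i != j the sum X satisfies X = j X. *)
Lemma sum_qpsk_corr i j k :
  \sum_(ss | in_prod S ss) qpsk_seq (R:=R) (ss i) k * (qpsk_seq (ss j) k)^*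
    = (i == j)%:R * #|[pred ss | in_prod S ss]|%:R.
Proof.
have [<-|neq_ij] := eqVneq i j.
  by rewrite mul1r -sumr_const; apply: eq_bigr => ss _; rewrite expr_i_conj.
rewrite mul0r; set X := \sum_(ss | _) _.
have X_rot : X = 'i * X.
  rewrite {1}/X (reindex_inj (rot_at_inj (i:=i))) mulr_sumr /=.
  apply: eq_big => [ss|ss _]; first by rewrite in_prod_rot_at.
  by rewrite !ffunE eqxx eq_sym (negbTE neq_ij) qpsk_seq_rot mulrA.
apply/eqP; have : X * (1 - 'i) == 0 by rewrite mulrBr mulr1 mulrC -X_rot subrr.
by rewrite mulf_eq0 subr_eq0 [1 == _]eq_sym (negbTE (@i_neq1 R)) orbF.
Qed.

Lemma sum_sqmod_qam_sum k :
  \sum_(ss | in_prod S ss) sqmod (qam_sum ss k : C)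
    = #|[pred ss | in_prod S ss]|%:R * qam_energy n.
Proof.
apply: complexI; rewrite rmorph_sum rmorphM rmorph_nat rmorph_sum /=.
have expand ss : (sqmod (qam_sum ss k : C))%:C = \sum_(i < n) \sum_(j < n)
    ((2 ^+ (n - 1 - i))%:R * (2 ^+ (n - 1 - j))%:R) *
    (qpsk_seq (R:=R) (ss i) k * (qpsk_seq (ss j) k)^*).
  rewrite sqmodE rmorph_sum mulr_suml; apply: eq_bigr => i _.
  rewrite mulr_sumr; apply: eq_bigr => j _.
  by rewrite rmorphM rmorph_nat mulrACA.
under eq_bigr do rewrite expand.
rewrite exchange_big mulr_sumr; apply: eq_bigr => i _ /=.
rewrite exchange_big; under eq_bigr do rewrite -mulr_sumr sum_qpsk_corr //.
rewrite (bigD1 i) //= big1 => [|j neq_ji]; last by rewrite eq_sym (negbTE neq_ji) mul0r mulr0.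
by rewrite eqxx mul1r addr0 mulrC expr2 rmorphM rmorph_nat.
Qed.

Lemma sum_sqnorm_qam :
  \sum_(ss | in_prod S ss) sqnorm (qam_seq R ss)
    = #|[pred ss | in_prod S ss]|%:R * (N%:R * qam_energy n / 2).
Proof.
transitivity (\sum_(k < N) \sum_(ss | in_prod S ss) 1 / 2 * sqmod (qam_sum ss k : C)).
  rewrite exchange_big; apply: eq_bigr => ss _; apply: eq_bigr => k _.
  by rewrite -sqmod_qam_const -sqmodM.
under eq_bigr do rewrite -mulr_sumr sum_sqmod_qam_sum.
by rewrite sumr_const card_ord -mulr_natr; ring.
Qed.

Lemma Pav_qam : (0 < #|[pred ss | in_prod S ss]|)%N ->
  Pav R S = N%:R * qam_energy n / 2.
Proof.
move=> card_gt0; rewrite /Pav sum_sqnorm_qam mulrC mulKf //.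
by rewrite pnatr_eq0 -lt0n.
Qed.

End RotationInvariantFamily.

Definition qam_gain {R : realType} (n : nat) (y : R) : R :=
  \sum_(i < n) (2 ^+ (n - 1 - i))%:R * y ^+ i.

Section PeakPower.
Variable R : realType.
Local Notation C := R[i].
Local Notation normc := (@Normc.normc R).

Lemma normc_ge0 (z : C) : 0 <= normc z.
Proof. by rewrite normc_sqmod sqrtr_ge0. Qed.

Lemma PEP_le (T f0 df M : R) (N : nat) (a : 'I_N -> C) : 0 <= T ->
  (forall t, 0 <= t <= T -> Penv f0 df a t <= M) -> PEP T f0 df a <= M.
Proof.
move=> T_ge0 Penv_le; apply: ge_sup.
  by exists (Penv f0 df a 0), 0 => //=; rewrite in_itv /= lexx T_ge0.
by move=> _ [t t_in <-]; apply: Penv_le; move: t_in; rewrite /= in_itv.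
Qed.

(* The supremum defining PEP is only meaningful for an envelope bounded above. *)
Lemma Penv_le_PEP (T f0 df K t : R) (N : nat) (a : 'I_N -> C) :
  (forall t, Penv f0 df a t <= K) -> 0 <= t <= T -> Penv f0 df a t <= PEP T f0 df a.
Proof.
move=> Penv_le t_in; apply: ub_le_sup; first by exists K => _ [s _ <-].
by exists t => //=; rewrite in_itv.
Qed.

Lemma Penv_qpsk_le (f0 df t : R) (N : nat) (s : qpsk N) :
  Penv f0 df (qpsk_seq s) t <= N%:R ^+ 2.
Proof.
rewrite /Penv sqmod_normc lerXn2r ?nnegrE ?normc_ge0 ?ler0n //.
apply: le_trans (normc_sum _) _.
rewrite -[X in _ <= X%:R](card_ord N) -sumr_const.
by apply: ler_sum => k _; rewrite Normc.normcM normc_expr_i mul1r normc_sqmod sqmod_expj sqrtr1.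
Qed.

Lemma Ssig_qam (f0 df t : R) (n N : nat) (ss : {ffun 'I_n -> qpsk N}) :
  Ssig f0 df (qam_seq R ss) t =
  qam_const * \sum_(i < n) (2 ^+ (n - 1 - i))%:R * Ssig f0 df (qpsk_seq (ss i)) t.
Proof.
rewrite /Ssig; under eq_bigr do rewrite qam_seqE -mulrA.
rewrite -mulr_sumr; apply: congr1.
under eq_bigr do rewrite /qam_sum mulr_suml.
rewrite exchange_big; apply: eq_bigr => i _ /=.
by rewrite mulr_sumr; apply: eq_bigr => k _; rewrite mulrA.
Qed.

Lemma Penv_qam_le (f0 df t : R) (n N : nat) (ss : {ffun 'I_n -> qpsk N}) (b : 'I_n -> R) :
  (forall i, normc (Ssig f0 df (qpsk_seq (ss i)) t) <= b i) ->
  Penv f0 df (qam_seq R ss) t <= (\sum_(i < n) (2 ^+ (n - 1 - i))%:R * b i) ^+ 2 / 2.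
Proof.
move=> Ssig_le; rewrite /Penv Ssig_qam sqmodM sqmod_qam_const mul1r sqmod_normc mulrC.
apply: ler_wpM2r; first by rewrite invr_ge0 ler0n.
have normc_le : normc (\sum_(i < n) (2 ^+ (n - 1 - i))%:R * Ssig f0 df (qpsk_seq (ss i)) t)
    <= \sum_(i < n) (2 ^+ (n - 1 - i))%:R * b i.
  apply: le_trans (normc_sum _) _; apply: ler_sum => i _.
  by rewrite Normc.normcM normc_nat ler_wpM2l.
by rewrite lerXn2r ?nnegrE ?normc_ge0 // (le_trans (normc_ge0 _) normc_le).
Qed.

Lemma PEP_qam_le (T f0 df x y : R) (n N : nat) (S : 'I_n -> {set qpsk N})
    (ss : {ffun 'I_n -> qpsk N}) :
  0 <= T -> 0 <= x -> 0 <= y ->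
  (forall (i : 'I_n) (s : qpsk N), s \in S i ->
     PEP T f0 df (qpsk_seq s) <= x * y ^+ (2 * i) * N%:R) ->
  in_prod S ss ->
  PEP T f0 df (qam_seq R ss) <= x * N%:R * qam_gain n y ^+ 2 / 2.
Proof.
move=> T_ge0 x_ge0 y_ge0 S_pep ss_in; apply: PEP_le => // t t_in.
have xN_ge0 : 0 <= x * N%:R by rewrite mulr_ge0.
apply: le_trans (Penv_qam_le (b := fun i => Num.sqrt (x * N%:R) * y ^+ i) _) _.
  move=> i; rewrite normc_sqmod -[sqmod _]/(Penv f0 df _ t).
  have Penv_le : Penv f0 df (qpsk_seq (ss i)) t <= x * y ^+ (2 * i) * N%:R.
    apply: le_trans (Penv_le_PEP (fun t => Penv_qpsk_le f0 df t (ss i)) t_in) _.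
    exact: S_pep (forallP ss_in i).
  apply: le_trans (ler_wsqrtr Penv_le) _.
  by rewrite mulrAC sqrtrM // exprM exprAC sqrtr_sqr ger0_norm ?exprn_ge0.
under eq_bigr do rewrite mulrCA.
by rewrite -mulr_sumr exprMn sqr_sqrtr.
Qed.

End PeakPower.

Section Ratio.
Variable R : realType.

Lemma qam_energyE (n : nat) : 3 * qam_energy n = 2 ^+ (2 * n) - 1 :> R.
Proof.
rewrite exprM -[X in _ = _ - X](expr1n R n) subrXX.
congr (_ * _); first by rewrite expr2; lra.
by apply: eq_bigr => i _; rewrite expr1n mulr1 natrX exprAC subn1.
Qed.

Lemma exp4_gt1 (n : nat) : (0 < n)%N -> 1 < (2 : R) ^+ (2 * n).
Proof. by move=> n_gt0; rewrite exprn_egt1 ?muln_eq0 -?lt0n ?n_gt0 //; lra. Qed.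

Lemma qam_energy_gt0 (n : nat) : (0 < n)%N -> 0 < qam_energy n :> R.
Proof.
move/exp4_gt1; rewrite -subr_gt0 -qam_energyE.
by rewrite pmulr_rgt0 // ltr0n.
Qed.

Lemma qam_gain_ge0 (n : nat) (y : R) : 0 <= y -> 0 <= qam_gain n y.
Proof. by move=> y_ge0; rewrite sumr_ge0 // => i _; rewrite mulr_ge0 ?exprn_ge0. Qed.

Lemma qam_gainE (n : nat) (y : R) : (2 - y) * qam_gain n y = 2 ^+ n - y ^+ n.
Proof. by rewrite subrXX; congr (_ * _); apply: eq_bigr => i _; rewrite natrX subn1. Qed.

Lemma qam_peak_avg_ratio (n N : nat) (x y : R) :
  (0 < n)%N -> (0 < N)%N -> y < 2 ->
  (x * N%:R * qam_gain n y ^+ 2 / 2) / (N%:R * qam_energy n / 2) =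
    3 / 4 * ((2 : R) ^+ (2 * n) / (2 ^+ (2 * n) - 1)) *
    ((1 - (y / 2) ^+ n) / (1 - y / 2)) ^+ 2 * x.
Proof.
move=> n_gt0 N_gt0 y_lt2.
have four_n_gt1 := exp4_gt1 n_gt0.
have -> : qam_energy n = (2 ^+ (2 * n) - 1) / 3 :> R by rewrite -qam_energyE; field.
have -> : qam_gain n y = (2 ^+ n - y ^+ n) / (2 - y) by rewrite -qam_gainE; field; lra.
move: four_n_gt1; rewrite (expr_div_n y 2 n) mul2n -addnn exprD.
set p := (2 : R) ^+ n; set Y := y ^+ n => p2_gt1.
have p_neq0 : p != 0 by rewrite expf_neq0 //; apply/eqP; lra.
have N_neq0 : (N%:R : R) != 0 by rewrite pnatr_eq0 -lt0n.
have y_neq2 : 2 - y != 0 by apply/eqP; lra.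
have pp_neq1 : p * p - 1 != 0 by apply/eqP; lra.
by field; rewrite y_neq2 pp_neq1 p_neq0 N_neq0.
Qed.

End Ratio.

Theorem theorem1 (R : realType) (T f0 df : R) (N n : nat) (x y : R)
  (S : 'I_n -> {set qpsk N}) :
  0 < T ->
  (exists m : nat, (0 < m)%N /\ T * df = m%:R) ->
  (0 < N)%N -> (0 < n)%N ->
  1 < x -> 1 <= y -> y < 2 ->
  (forall i : 'I_n, S i != finset.set0) ->
  (forall (i : 'I_n) (s : qpsk N), s \in S i ->
     PEP T f0 df (qpsk_seq s) <= x * y ^+ (2 * i) * N%:R) ->
  (forall (i : 'I_n) (s : qpsk N), s \in S i -> forall m : 'I_4,
     exists2 s' : qpsk N, s' \in S i &
       forall k : 'I_N, qpsk_seq (R:=R) s' k = 'i ^+ m * qpsk_seq s k) ->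
  PMEPR T f0 df S <=
    3 / 4 * ((2 : R) ^+ (2 * n) / (2 ^+ (2 * n) - 1)) *
    ((1 - (y / 2) ^+ n) / (1 - y / 2)) ^+ 2 * x.
Proof.
move=> T_gt0 _ N_gt0 n_gt0 x_gt1 y_ge1 y_lt2 S_ne S_pep S_rot.
have [x_ge0 y_ge0] : 0 <= x /\ 0 <= y by split; lra.
have PavE := Pav_qam S_rot (card_in_prod_gt0 S_ne).
have Pav_gt0 : 0 < Pav R S.
  by rewrite PavE !mulr_gt0 ?ltr0n ?invr_gt0 ?qam_energy_gt0.
rewrite -(qam_peak_avg_ratio x n_gt0 N_gt0 y_lt2) /PMEPR -PavE.
apply: bigmax_le => [|ss ss_in].
  by rewrite divr_ge0 ?(ltW Pav_gt0) // !mulr_ge0 ?invr_ge0 ?ler0n ?qam_gain_ge0.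
rewrite ler_pM2r ?invr_gt0 //.
exact: PEP_qam_le (ltW T_gt0) x_ge0 y_ge0 S_pep ss_in.
Qed.
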